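(* Let $\langle \mathcal{P}, T\rangle$ be a VPT representation of a graph $G$, and let $q\in V(T)$ with $d_T(q)=h\geq 4$. Suppose there exist $y_1,y_2\in N_T(q)$ such that for every $v\in V(G)$, $\{y_1,y_2\}\not\subseteq V(P_v)$. Then there exists a VPT representation $\langle \mathcal{P}',T'\rangle$ of $G$ with $V(T')=V(T)\cup\{a_q\}$, where $a_q\notin V(T)$, such that $d_{T'}(a_q)=3$, $d_{T'}(q)=h-1$, and $d_{T'}(x)=d_T(x)$ for every $x\in V(T')\setminus\{q,a_q\}$.
   Context: All graphs are finite, simple and connected. A VPT representation $\langle \mathcal{P},T\rangle$ of a graph $G$ is a family $\mathcal{P}=(P_v)_{v\in V(G)}$ of subpaths of a tree $T$ such that two distinct vertices $v,v'$ of $G$ are adjacent iff $P_v$ and $P_{v'}$ share at least one vertex. *)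

From mathcomp Require Import all_boot.
Set Implicit Arguments. Unset Strict Implicit. Unset Printing Implicit Defensive.

Definition simple_graph (T : finType) (e : rel T) : Prop :=
  symmetric e /\ irreflexive e.

Definition connected_graph (T : finType) (e : rel T) : Prop :=
  forall x y, connect e x y.

Definition has_cycle (T : finType) (e : rel T) : Prop :=
  exists (x : T) (p : seq T),
    [/\ 2 <= size p, path e x p, uniq (x :: p) & e (last x p) x].

Definition is_tree (T : finType) (t : rel T) : Prop :=
  [/\ simple_graph t, connected_graph t & ~ has_cycle t].

Definition is_subpath (T : finType) (t : rel T) (s : seq T) : Prop :=
  match s with
  | [::] => False
  | x :: p => path t x p && uniq (x :: p)
  end.

Definition is_VPT (V W : finType) (e : rel V) (t : rel W) (P : V -> seq W)
  : Prop :=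
  [/\ is_tree t,
      forall v, is_subpath t (P v)
    & forall u v, u != v -> (e u v <-> has (fun x => x \in P v) (P u))].

Definition nbhd (T : finType) (t : rel T) (x : T) : {set T} := [set y | t x y].
Definition degree (T : finType) (t : rel T) (x : T) : nat := #|nbhd t x|.

From mathcomp Require Import all_boot zify.
Set Implicit Arguments. Unset Strict Implicit. Unset Printing Implicit Defensive.

(* Given the tree T, the vertex q and two neighbours y1, y2 of q such that no
   path P_v contains both y1 and y2, the new tree T' is obtained by deleting
   the edges q y1 and q y2 and adding a new vertex a_q adjacent to q, y1 and
   y2; vertices of T' are [option W], with a_q = [None].  Each path P_v is
   mapped to P'_v by inserting a_q between any two consecutive vertices of
   P_v that form a deleted edge; since P_v does not meet both y1 and y2, this
   happens at most once and P'_v is again a path of T'. *)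

Lemma has_cycleP (T : finType) (e : rel T) :
  has_cycle e <-> exists c : seq T, [/\ 3 <= size c, cycle e c & uniq c].
Proof.
split=> [[x [p [size_p path_p uniq_p last_p]]] | [[|x p] [//= size_p]]].
  by exists (x :: p); split=> //=; rewrite rcons_path path_p last_p.
by rewrite rcons_path => /andP[path_p last_p] uniq_p; exists x, p.
Qed.

Lemma card_option (T : finType) (A : {set option T}) :
  #|A| = (None \in A) + #|[set b | Some b \in A]|.
Proof.
rewrite (cardsD1 None A); congr (_ + _).
have -> : A :\ None = Some @: [set b | Some b \in A].
  apply/setP => -[b|]; rewrite !inE; first by rewrite mem_imset ?inE //; exact: Some_inj.
  by apply/esym/negbTE/imsetP => -[].
by rewrite card_imset //; exact: Some_inj.
Qed.

Lemma map_Some_pmap (T : eqType) (c : seq (option T)) :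
  None \notin c -> c = map Some (pmap id c).
Proof. by elim: c => [|[a|] c IH] //=; rewrite inE => /IH {1}->. Qed.

Section SplitClaw.

Variables (W : finType) (t : rel W) (q y1 y2 : W).
Hypotheses (t_sym : symmetric t) (t_irr : irreflexive t).
Hypotheses (q_y1 : t q y1) (q_y2 : t q y2) (y1_neq_y2 : y1 != y2).

Definition cut_edge (a b : W) : bool :=
  ((a == q) && ((b == y1) || (b == y2))) || ((b == q) && ((a == y1) || (a == y2))).

Definition t_cut (a b : W) : bool := t a b && ~~ cut_edge a b.

Definition claw (b : W) : bool := [|| b == q, b == y1 | b == y2].

Definition t_new (a b : option W) : bool :=
  match a, b with
  | Some a, Some b => t_cut a b
  | Some a, None | None, Some a => claw a
  | None, None => false
  end.

Lemma t_cut_sub : subrel t_cut t.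
Proof. by move=> a b /andP[]. Qed.

(* Deleted edges join claw vertices, so a_q can be inserted inside them. *)
Lemma cut_edge_claw a b : cut_edge a b -> claw a && claw b.
Proof.
by rewrite /claw => /orP[] /andP[/eqP-> /orP[]/eqP->]; rewrite !eqxx ?orbT.
Qed.

Lemma claw_spoke b : claw b -> b != q ->
  [/\ t q b, t b q, ~~ t_cut q b & ~~ t_cut b q].
Proof.
rewrite /t_cut /cut_edge /claw => /or3P[/eqP->|/eqP->|/eqP->]; rewrite ?eqxx //.
  by rewrite [t y1 q]t_sym q_y1 /= orbT.
by rewrite [t y2 q]t_sym q_y2 /= !orbT.
Qed.

Lemma t_new_sym : symmetric t_new.
Proof. by move=> [a|] [b|] //=; rewrite /t_cut t_sym /cut_edge orbC. Qed.

Lemma t_new_irr : irreflexive t_new.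
Proof. by move=> [a|] //=; rewrite /t_cut t_irr. Qed.

(* Every edge of T is either an edge of T' or a detour through a_q. *)
Lemma t_new_connected : connected_graph t -> connected_graph t_new.
Proof.
move=> t_conn.
have edge a b : t a b -> connect t_new (Some a) (Some b).
  move=> t_ab; case cut_ab: (cut_edge a b).
    have /andP[claw_a claw_b] := cut_edge_claw cut_ab.
    by apply: (connect_trans (y := None)); apply: connect1.
  by apply: connect1; rewrite /= /t_cut t_ab cut_ab.
have old a b : connect t_new (Some a) (Some b).
  have /connectP[p path_p ->] := t_conn a b.
  elim: p a path_p => [|c p IH] a /= => [_ | /andP[t_ac /IH]]; first exact: connect0.
  exact: connect_trans (edge a c t_ac).
have from_q x : connect t_new (Some q) x.
  by case: x => [a|]; [exact: old | apply: connect1; rewrite /= /claw eqxx].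
move=> x y; apply: connect_trans (from_q y).
by rewrite (sym_connect_sym t_new_sym).
Qed.

(* A cut-tree path whose ends are adjacent in T but not in the cut tree has at
   least two edges, so the T-edge between its ends closes it to a cycle. *)
Lemma detour_cycle x p : path t_cut x p -> uniq (x :: p) ->
  t (last x p) x -> ~~ t_cut x (last x p) -> has_cycle t.
Proof.
case: p => [|z [|z' p]]; [by rewrite /= t_irr | by rewrite /= andbT => -> |].
move=> path_p uniq_p last_p _; exists x, [:: z, z' & p]; split=> //.
exact: (sub_path t_cut_sub path_p).
Qed.

(* A cut-tree path between two distinct claw vertices yields a cycle of T:
   either its part between q and a spoke is closed by a deleted edge, or it
   avoids q and is closed through q. *)
Lemma claw_path_cycle u w s : claw u -> claw w ->
  path t_cut u (rcons s w) -> uniq (u :: rcons s w) -> has_cycle t.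
Proof.
move=> claw_u claw_w path_s uniq_s.
have w_neq_u : w != u.
  by apply: contraTneq uniq_s => ->; rewrite cons_uniq mem_rcons mem_head.
have [u_q | u_neq_q] := eqVneq u q.
  rewrite u_q in w_neq_u path_s uniq_s.
  have [_ w_q q_w _] := claw_spoke claw_w w_neq_u.
  by apply: (detour_cycle path_s uniq_s); rewrite last_rcons.
have [q_u u_q _ u_q_cut] := claw_spoke claw_u u_neq_q.
have [q_in | q_notin] := boolP (q \in rcons s w).
  move: path_s uniq_s; case/splitPr: q_in => s1 s2.
  rewrite -cat_rcons -cat_cons cat_path cat_uniq => /andP[path_s1 _] /andP[uniq_s1 _].
  by apply: (detour_cycle path_s1 uniq_s1); rewrite last_rcons.
have w_neq_q : w != q by apply: contraNneq q_notin => <-; rewrite mem_rcons mem_head.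
have [_ w_q _ _] := claw_spoke claw_w w_neq_q.
exists q, (u :: rcons s w); split.
- by rewrite /= size_rcons.
- by rewrite /= q_u (sub_path t_cut_sub path_s).
- by rewrite cons_uniq in_cons negb_or eq_sym u_neq_q q_notin uniq_s.
- by rewrite /= last_rcons.
Qed.

Lemma t_new_acyclic : ~ has_cycle t -> ~ has_cycle t_new.
Proof.
move=> t_acyclic /has_cycleP[c [size_c cycle_c uniq_c]].
have [new_in | new_notin] := boolP (None \in c); last first.
  rewrite (map_Some_pmap new_notin) size_map cycle_map (map_inj_uniq Some_inj)
    in size_c cycle_c uniq_c.
  apply: t_acyclic; apply/has_cycleP; exists (pmap id c).
  by split=> //; exact: (sub_cycle t_cut_sub cycle_c).
case/rot_to: new_in => i c' rot_c.
have : cycle t_new (None :: c') by rewrite -rot_c rot_cycle.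
have : (None \notin c') && uniq c' by rewrite -cons_uniq -rot_c rot_uniq.
have : 3 <= size (None :: c') by rewrite -rot_c size_rot.
move=> + /andP[new_notin uniq_c']; move: uniq_c'.
rewrite (map_Some_pmap new_notin) (map_inj_uniq Some_inj).
case: (pmap id c') => [|u s] //; case/lastP: s => [|s w] // uniq_s _.
rewrite /= rcons_path path_map last_map last_rcons => /and3P[claw_u path_s claw_w].
by apply: t_acyclic; exact: (claw_path_cycle claw_u claw_w path_s).
Qed.

Lemma t_new_tree : is_tree t -> is_tree t_new.
Proof.
case=> _ t_conn t_acyclic; split; last exact: t_new_acyclic.
  by split; [exact: t_new_sym | exact: t_new_irr].
exact: t_new_connected.
Qed.

Fixpoint subdivide_from (x : W) (s : seq W) : seq (option W) :=
  if s is y :: s' then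
    (if cut_edge x y then [:: None; Some y] else [:: Some y]) ++ subdivide_from y s'
  else [::].

Definition subdivide (s : seq W) : seq (option W) :=
  if s is x :: s' then Some x :: subdivide_from x s' else [::].

Lemma mem_subdivide_from_Some x s a : (Some a \in subdivide_from x s) = (a \in s).
Proof. by elim: s x => [|y s IH] x //=; case: ifP; rewrite /= !inE IH. Qed.

Lemma mem_subdivide_from_None x s : None \in subdivide_from x s ->
  q \in x :: s /\ (y1 \in x :: s \/ y2 \in x :: s).
Proof.
elim: s x => [|y s IH] x //=; have sub := @mem_behead _ [:: x, y & s].
case: ifP => [cut_xy _ | _]; last first.
  rewrite inE /= => /IH[q_in y_in]; split; first exact: sub.
  by case: y_in => y_in; [left | right]; exact: sub.
case/orP: cut_xy => /andP[/eqP-> /orP[]/eqP->]; rewrite !inE !eqxx ?orbT;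
  by split; auto.
Qed.

Lemma path_subdivide_from x s :
  path t x s -> path t_new (Some x) (subdivide_from x s).
Proof.
elim: s x => [|y s IH] x //= /andP[t_xy /IH path_s]; rewrite cat_path.
case: ifP => cut_xy /=; last by rewrite /t_cut t_xy cut_xy.
by have /andP[-> ->] := cut_edge_claw cut_xy.
Qed.

Lemma cut_edge_once x y s :
  uniq [:: x, y & s] -> ~ (y1 \in [:: x, y & s] /\ y2 \in [:: x, y & s]) ->
  cut_edge x y -> None \notin subdivide_from y s.
Proof.
move=> /andP[x_notin _] no_y12 cut_xy.
apply/negP => /mem_subdivide_from_None[q_in y_in].
have sub := @mem_behead _ [:: x, y & s].
case/orP: cut_xy => /andP[/eqP x_q]; first by rewrite x_q q_in in x_notin.
move=> /orP[] /eqP x_y; subst x; case: y_in => y_in;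
  try by rewrite y_in in x_notin.
all: by apply: no_y12; split; rewrite ?mem_head ?(sub _ y_in).
Qed.

Lemma uniq_subdivide_from x s : uniq (x :: s) ->
  ~ (y1 \in x :: s /\ y2 \in x :: s) -> uniq (Some x :: subdivide_from x s).
Proof.
elim: s x => [|y s IH] x // uniq_s no_y12.
have sub := @mem_behead _ [:: x, y & s].
have uniq_tail : uniq (Some y :: subdivide_from y s).
  apply: IH; first by case/andP: uniq_s.
  by case=> y1_in y2_in; apply: no_y12; rewrite !sub.
have x_notin : Some x \notin Some y :: subdivide_from y s.
  by rewrite inE mem_subdivide_from_Some (inj_eq Some_inj) -in_cons; case/andP: uniq_s.
rewrite [subdivide_from x _]/=; case: ifP => cut_xy; last by rewrite cons_uniq x_notin.
have new_notin := cut_edge_once uniq_s no_y12 cut_xy.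
rewrite cons_uniq in_cons negb_or x_notin cons_uniq.
by rewrite in_cons negb_or new_notin uniq_tail.
Qed.

Lemma mem_subdivide_Some s a : (Some a \in subdivide s) = (a \in s).
Proof.
by case: s => //= x s; rewrite !inE mem_subdivide_from_Some (inj_eq Some_inj).
Qed.

Lemma mem_subdivide_None s : None \in subdivide s -> q \in s.
Proof. by case: s => //= x s; rewrite inE /= => /mem_subdivide_from_None[]. Qed.

Lemma subdivide_subpath s : is_subpath t s ->
  ~ (y1 \in s /\ y2 \in s) -> is_subpath t_new (subdivide s).
Proof.
case: s => //= x s /andP[path_s uniq_s] no_y12.
by rewrite path_subdivide_from //; exact: uniq_subdivide_from.
Qed.

(* Two subdivided paths meet iff the original paths meet: a common a_q
   forces the common vertex q. *)
Lemma has_subdivide s1 s2 :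
  has (fun x => x \in subdivide s2) (subdivide s1) = has (fun x => x \in s2) s1.
Proof.
apply/hasP/hasP => [[[a|] in1 in2] | [a in1 in2]].
- by exists a; rewrite -mem_subdivide_Some.
- by exists q; exact: mem_subdivide_None.
- by exists (Some a); rewrite mem_subdivide_Some.
Qed.

Lemma degree_Some x : degree t_new (Some x) = claw x + #|[set b | t_cut x b]|.
Proof.
rewrite /degree /nbhd card_option inE /=; congr (_ + _).
by apply: eq_card => b; rewrite !inE.
Qed.

Lemma q_neq_y1 : q != y1.
Proof. by apply: contraTneq q_y1 => <-; rewrite t_irr. Qed.

Lemma q_neq_y2 : q != y2.
Proof. by apply: contraTneq q_y2 => <-; rewrite t_irr. Qed.

Lemma degree_new_vertex : degree t_new None = 3.
Proof.
rewrite /degree /nbhd card_option inE /= add0n.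
rewrite (eq_card (B := [set q; y1; y2])); last by move=> b; rewrite !inE /claw orbA.
rewrite setUC cardsU1 cards2 !inE negb_or q_neq_y1 /=.
by rewrite ![y2 == _]eq_sym (negbTE q_neq_y2) (negbTE y1_neq_y2).
Qed.

(* q loses y1 and y2 and gains a_q. *)
Lemma degree_q : degree t_new (Some q) = degree t q - 1.
Proof.
rewrite degree_Some /claw eqxx /=.
rewrite (eq_card (B := nbhd t q :\ y1 :\ y2)); last first.
  move=> b; rewrite !inE /t_cut /cut_edge eqxx (negbTE q_neq_y1) (negbTE q_neq_y2).
  by case: (t q b); case: (b == y1); case: (b == y2); rewrite ?andbF.
have card_y1 := cardsD1 y1 (nbhd t q).
have card_y2 := cardsD1 y2 (nbhd t q :\ y1).
rewrite !inE q_y1 q_y2 eq_sym y1_neq_y2 /= in card_y1 card_y2.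
rewrite /degree card_y1 card_y2; lia.
Qed.

(* y1 and y2 trade q for a_q; other vertices keep their neighbourhoods. *)
Lemma degree_other x : x != q -> degree t_new (Some x) = degree t x.
Proof.
move=> x_neq_q; rewrite degree_Some /claw (negbTE x_neq_q) /=.
have [x_y | x_not_y] := boolP ((x == y1) || (x == y2)).
  rewrite (eq_card (B := nbhd t x :\ q)); last first.
    by move=> b; rewrite !inE /t_cut /cut_edge (negbTE x_neq_q) x_y andbT andbC.
  have q_nbhd : q \in nbhd t x by rewrite inE t_sym; case/orP: x_y => /eqP->.
  by rewrite /degree (cardsD1 q (nbhd t x)) q_nbhd.
apply: eq_card => b.
by rewrite !inE /t_cut /cut_edge (negbTE x_neq_q) (negbTE x_not_y) andbF andbT.
Qed.

End SplitClaw.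

Theorem mainTheorem3
  (V W : finType) (e : rel V) (t : rel W) (P : V -> seq W)
  (HG : simple_graph e) (HGc : connected_graph e)
  (HP : is_VPT e t P)
  (q : W) (h : nat) (Hdeg : degree t q = h) (Hh : 4 <= h)
  (y1 y2 : W) (Hy1 : y1 \in nbhd t q) (Hy2 : y2 \in nbhd t q)
  (Hy12 : y1 != y2)
  (Hnot : forall v : V, ~ (y1 \in P v /\ y2 \in P v)) :
  exists (t' : rel (option W)) (P' : V -> seq (option W)),
    [/\ is_VPT e t' P',
        degree t' None = 3,
        degree t' (Some q) = h - 1
      & forall x : W, x != q -> degree t' (Some x) = degree t x].
Proof.
case: HP => t_tree P_paths P_inter.
have [[t_sym t_irr] _ _] := t_tree.
have q_y1 : t q y1 by rewrite inE in Hy1.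
have q_y2 : t q y2 by rewrite inE in Hy2.
exists (t_new t q y1 y2), (fun v => subdivide q y1 y2 (P v)); split.
- split; first exact: t_new_tree.
    by move=> v; exact: subdivide_subpath.
  by move=> u v u_neq_v; rewrite has_subdivide; exact: P_inter.
- exact: degree_new_vertex.
- by rewrite degree_q // Hdeg.
- by move=> x; exact: degree_other.
Qed.
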